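(* Let $n\in\mathbb{N}$, let $m\leqslant n$, let $\alpha_k>0$ and $\beta_k>0$ for $k=1,\ldots,m$, and let $0\leqslant\varphi_1<\ldots<\varphi_m<2\pi$. Put \[ h(z)\coloneq\sum_{k=1}^m\alpha_k\frac{1+e^{i\varphi_k}z}{1-e^{i\varphi_k}z},\qquad f\coloneq e^{-h},\qquad g(z)\coloneq\sum_{k=1}^m\beta_k\frac{1+e^{i\varphi_k}z}{1-e^{i\varphi_k}z}, \] and let $H(z)\coloneq\{f\}_n+2\{f\}_{n-1}z+2\{f\}_{n-2}z^2+\ldots+2\{f\}_0z^n$. Assume that $\operatorname{Re}H(z)>0$ for all $z\in\Delta$. Then \[ \operatorname{Re}\bigl(\{f\}_n\{g\}_0+\{f\}_{n-1}\{g\}_1+\ldots+\{f\}_0\{g\}_n\bigr)=0 \] holds if and only if $\operatorname{Re}H(e^{i\varphi_k})=0$ for all $k=1,\ldots,m$.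
   Context: $\Delta=\{z\in\mathbb{C}:|z|<1\}$ is the open unit disk. For a function $f$ holomorphic in $\Delta$, $\{f\}_j$ denotes its $j$-th Taylor coefficient at $0$, i.e. $f(z)=\sum_{j\geqslant0}\{f\}_jz^j$. *)

From HB Require Import structures.
From mathcomp Require Import all_boot all_order all_algebra.
From mathcomp Require Import all_classical all_reals all_analysis.
From mathcomp Require Import complex.
Set Implicit Arguments.
Unset Strict Implicit.
Unset Printing Implicit Defensive.
Import Order.TTheory GRing.Theory Num.Theory.
Import numFieldNormedType.Exports.
Local Open Scope ring_scope.
Local Open Scope classical_set_scope.
Local Open Scope complex_scope.

Definition cabs (R : realType) (z : R[i]) : R := ComplexField.Normc.normc z.

Definition expi (R : realType) (x : R) : R[i] := cos x +i* sin x.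

Definition expC (R : realType) (w : R[i]) : R[i] :=
  (expR (complex.Re w))%:C * expi (complex.Im w).

Definition taylor_coefs (R : realType) (F : R[i] -> R[i]) (c : nat -> R[i]) :
  Prop :=
  forall z : R[i], cabs z < 1 ->
    (fun N => cabs (\sum_(j < N) c j * z ^+ j - F z)) @ \oo --> (0 : R).

Definition herglotz_sum (R : realType) (m : nat) (a phi : 'I_m -> R)
  (z : R[i]) : R[i] :=
  \sum_(k < m) (a k)%:C * ((1 + expi (phi k) * z) / (1 - expi (phi k) * z)).

Definition Hpoly (R : realType) (n : nat) (cf : nat -> R[i]) (z : R[i]) : R[i] :=
  cf n + \sum_(1 <= j < n.+1) 2%:R * cf (n - j)%N * z ^+ j.

From HB Require Import structures.
From mathcomp Require Import all_boot all_order all_algebra.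
From mathcomp Require Import all_classical all_reals all_analysis.
From mathcomp Require Import complex.
From mathcomp Require Import ring lra.
Set Implicit Arguments.
Unset Strict Implicit.
Unset Printing Implicit Defensive.
Import Order.TTheory GRing.Theory Num.Theory.
Import numFieldNormedType.Exports.
Local Open Scope ring_scope.
Local Open Scope classical_set_scope.
Local Open Scope complex_scope.

(** Expanding each Herglotz kernel, [(1 + u) / (1 - u) = 1 + 2 u + 2 u^2 + ...],
  and using uniqueness of Taylor coefficients gives [{g}_0 = sum_k beta_k] and
  [{g}_j = 2 sum_k beta_k e^{i j phi_k}] for [j >= 1]; hence
  [sum_j {f}_(n-j) {g}_j = sum_k beta_k H(e^{i phi_k})].  Since [Re H > 0] in
  the disk, continuity along radii gives [Re H >= 0] on the circle, and a sum of
  nonnegative terms with positive weights [beta_k] vanishes iff every term does. *)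

Section ComplexModulus.
Variable R : realType.
Implicit Types x y z w : R[i].

Lemma cabs_ge0 z : 0 <= cabs z.
Proof. exact: (@normr_ge0 _ (Rcomplex R)). Qed.

Lemma cabsN x : cabs (- x) = cabs x.
Proof. exact: (@normrN _ (Rcomplex R)). Qed.

Lemma cabsB x y : cabs (x - y) <= cabs x + cabs y.
Proof. exact: (@ler_normB _ (Rcomplex R)). Qed.

Lemma cabs_sum (I : Type) (r : seq I) (P : pred I) (F : I -> R[i]) :
  cabs (\sum_(i <- r | P i) F i) <= \sum_(i <- r | P i) cabs (F i).
Proof. exact: (@ler_norm_sum _ (Rcomplex R)). Qed.

Lemma cabs_eq0 z : (cabs z == 0) = (z == 0).
Proof. exact: (@normr_eq0 _ (Rcomplex R)). Qed.

Lemma cabsM x y : cabs (x * y) = cabs x * cabs y.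
Proof. exact: ComplexField.Normc.normcM. Qed.

Lemma cabs1 : cabs (1 : R[i]) = 1.
Proof. exact: ComplexField.Normc.normc1. Qed.

Lemma cabsX z j : cabs (z ^+ j) = cabs z ^+ j.
Proof. by elim: j => [|j IH]; rewrite ?cabs1 // !exprS cabsM IH. Qed.

Lemma cabsV z : cabs z^-1 = (cabs z)^-1.
Proof. exact: ComplexField.Normc.normcV. Qed.

Lemma cabsR (t : R) : cabs t%:C = `|t|.
Proof. by rewrite /cabs /= expr0n /= addr0 sqrtr_sqr. Qed.

Lemma cabs_nat n : cabs (n%:R : R[i]) = n%:R.
Proof.
have -> : (n%:R : R[i]) = (n%:R : R)%:C by rewrite rmorph_nat.
by rewrite cabsR ger0_norm.
Qed.

Lemma cabs_expi (t : R) : cabs (expi t) = 1.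
Proof. by rewrite /cabs /expi /= cos2Dsin2 sqrtr1. Qed.

Lemma ReMl (t : R) z : complex.Re (t%:C * z) = t * complex.Re z.
Proof. by case: z => a b /=; rewrite mul0r subr0. Qed.

Lemma Re_sum (I : Type) (r : seq I) (F : I -> R[i]) :
  complex.Re (\sum_(i <- r) F i) = \sum_(i <- r) complex.Re (F i).
Proof. exact: (@raddf_sum _ _ (@complex.Re R : Rcomplex R -> R)). Qed.

End ComplexModulus.

Section PowerSeries.
Variable R : realType.
Implicit Types (c d : nat -> R[i]) (z : R[i]).

Definition psum c z N := \sum_(j < N) c j * z ^+ j.

Lemma psumS c z N : psum c z N.+1 = psum c z N + c N * z ^+ N.
Proof. by rewrite /psum big_ord_recr. Qed.

Lemma psumSl c z N : psum c z N.+1 = c 0%N + z * psum (fun j => c j.+1) z N.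
Proof.
rewrite /psum big_ord_recl expr0 mulr1 mulr_sumr; congr (_ + _).
by apply: eq_bigr => j _; rewrite exprS mulrCA.
Qed.

Lemma sum_expr_le2 (x : R) N : 0 <= x -> x <= 2^-1 -> \sum_(j < N) x ^+ j <= 2.
Proof.
move=> x0 x_le; set S := \sum_(j < N) _.
have S0 : 0 <= S by apply: sumr_ge0 => j _; rewrite exprn_ge0.
have xN0 : 0 <= x ^+ N by rewrite exprn_ge0.
have eS : (x - 1) * S = x ^+ N - 1 by rewrite subrX1.
have h2 : 2 * 2^-1 = 1 :> R by rewrite divff // pnatr_eq0.
nra.
Qed.

Lemma psum_coef_bounded c (q : R) : 0 < q ->
  cabs (psum c q%:C N) @[N --> \oo] --> (0 : R) ->
  exists M, forall j, cabs (c j) * q ^+ j <= M.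
Proof.
move=> q0 /(cvgP _) /cvg_seq_bounded /ex_bound.
case=> [|M hM]; first exact: (globally_properfilter (a := 0%N)).
exists (M + M) => j.
have -> : cabs (c j) * q ^+ j = cabs (psum c q%:C j.+1 - psum c q%:C j).
  by rewrite psumS addrC addKr cabsM cabsX cabsR gtr0_norm.
apply: le_trans (cabsB _ _) _.
by apply: lerD; apply: le_trans (ler_norm _) (hM _ _).
Qed.

Lemma psum_tail_le c (q M t : R) N : 0 < q -> 0 < t -> 2 * t <= q ->
  (forall j, cabs (c j) * q ^+ j <= M) ->
  cabs (psum c t%:C N.+1 - c 0%N) <= 2 * M / q * t.
Proof.
move=> q0 t0 tq hM.
have M0 : 0 <= M.
  by apply: le_trans (hM 0%N); rewrite mulr_ge0 ?cabs_ge0 ?exprn_ge0 ?ltW.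
have x0 : 0 <= t / q by rewrite divr_ge0 ?ltW.
have x_le : t / q <= 2^-1 by rewrite ler_pdivrMr //; lra.
rewrite psumSl addrC addKr cabsM cabsR gtr0_norm // mulrC.
rewrite ler_pM2r //; apply: le_trans (cabs_sum _ _ _) _.
apply: (@le_trans _ _ (\sum_(j < N) M / q * (t / q) ^+ j)).
  apply: ler_sum => j _; rewrite cabsM cabsX cabsR gtr0_norm //.
  have -> : cabs (c j.+1) * t ^+ j
            = cabs (c j.+1) * q ^+ j.+1 * (q^-1 * (t / q) ^+ j).
    by rewrite expr_div_n exprSr; field; rewrite expf_neq0 // gt_eqF.
  rewrite mulrA ler_wpM2r ?exprn_ge0 //.
  by apply: ler_wpM2r; [rewrite invr_ge0 ltW | exact: hM].
rewrite -big_distrr /= (_ : 2 * M / q = M / q * 2); last by ring.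
by apply: ler_wpM2l; [exact: divr_ge0 M0 (ltW q0) | exact: sum_expr_le2].
Qed.

Lemma psum_cvg0_coef0_eq0 c :
  (forall t : R, 0 < t < 1 -> cabs (psum c t%:C N) @[N --> \oo] --> (0 : R)) ->
  c 0%N = 0.
Proof.
move=> hc.
(* Convergence at [t = 1/2] bounds [|c_j| 2^-j], so that the tail of the
   series at [t <= 1/4] is [O(t)]. *)
have q0 : (0 : R) < 2^-1 by rewrite invr_gt0.
have q1 : (2^-1 : R) < 1 by rewrite invf_lt1 ?ltr1n.
have [M hM] := psum_coef_bounded q0 (hc 2^-1 ltac:(by rewrite q0 q1)).
set K := 2 * M / 2^-1.
have bound0 t : 0 < t -> t <= 4^-1 -> cabs (c 0%N) <= K * t.
  move=> t0 t4.
  have t1 : t < 1 by apply: le_lt_trans t4 _; rewrite invf_lt1 ?ltr1n.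
  rewrite -[K * t]add0r.
  pose f N := cabs (psum c t%:C N).
  apply: (cvgr_to_ge (F := \oo) (f := fun N => f N.+1 + K * t)).
    apply: cvgD; last exact: cvg_cst.
    by rewrite (cvg_shiftS f); apply: hc; rewrite t0.
  apply: nearW => N.
  rewrite -{1}(subKr (psum c t%:C N.+1) (c 0%N)).
  apply: le_trans (cabsB _ _) (lerD (lexx _) _).
  apply: psum_tail_le => //; lra.
apply/eqP; rewrite -cabs_eq0 eq_le cabs_ge0 andbT -(mulr0 K).
apply: (cvgr_to_ge (F := (0:R)^'+) (f := fun t => K * t)).
  by apply: cvgMl_tmp; exact: cvg_at_right_filter cvg_id.
near=> t; apply: bound0; near: t; first exact: nbhs_right_gt.
by apply: nbhs_right_le; rewrite invr_gt0.
Unshelve. all: by end_near.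
Qed.

Lemma psum_cvg0_coef_eq0 c :
  (forall t : R, 0 < t < 1 -> cabs (psum c t%:C N) @[N --> \oo] --> (0 : R)) ->
  forall j, c j = 0.
Proof.
move=> hc j; elim: j c hc => [|j IH] c hc; first exact: psum_cvg0_coef0_eq0.
apply: (IH (fun j => c j.+1)) => t t01; have /andP[t0 _] := t01.
have -> : (fun N => cabs (psum (fun j => c j.+1) t%:C N)) =
          (fun N => t^-1 * cabs (psum c t%:C N.+1)).
  apply/funext => N; rewrite psumSl psum_cvg0_coef0_eq0 // add0r cabsM cabsR.
  by rewrite gtr0_norm // mulKf // gt_eqF.
rewrite -(mulr0 t^-1); apply: cvgMl_tmp.
by rewrite (cvg_shiftS (fun N => cabs (psum c t%:C N))); exact: hc.
Qed.

Lemma taylor_coefs_unique F c d :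
  taylor_coefs F c -> taylor_coefs F d -> c =1 d.
Proof.
move=> hc hd j; apply/eqP; rewrite -subr_eq0; apply/eqP; move: j.
apply: (psum_cvg0_coef_eq0 (c := fun j => c j - d j)) => t /andP[t0 t1].
have tD : cabs t%:C < 1 by rewrite cabsR gtr0_norm.
pose err e N := cabs (psum e t%:C N - F t%:C).
apply: (squeeze_cvgr (f := cst 0) (h := fun N => err c N + err d N));
  last 2 first.
- exact: cvg_cst.
- by rewrite -(addr0 (0 : R)); apply: cvgD; [exact: hc | exact: hd].
apply: nearW => N; rewrite cabs_ge0 /=.
have -> : psum (fun j => c j - d j) t%:C N =
          (psum c t%:C N - F t%:C) - (psum d t%:C N - F t%:C).
  rewrite opprB addrA subrK /psum -sumrB.
  by apply: eq_bigr => j _; rewrite mulrBl.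
exact: cabsB.
Qed.

End PowerSeries.

Definition herglotz_coef {R : realType} (j : nat) : R[i] :=
  if j is 0 then 1 else 2.

Section HerglotzKernel.
Variable R : realType.
Implicit Types (u w z : R[i]).

Lemma psum_herglotz_coef u N : u != 1 ->
  psum herglotz_coef u N.+1 - (1 + u) / (1 - u) = - (2 * u ^+ N.+1) / (1 - u).
Proof.
move=> u1; have u1' : u - 1 != 0 by rewrite subr_eq0.
have u1'' : 1 - u != 0 by rewrite subr_eq0 eq_sym.
rewrite psumSl.
have -> : psum (fun j => herglotz_coef j.+1) u N = 2 * ((u ^+ N - 1) / (u - 1)).
  by rewrite /psum -mulr_sumr subrX1 mulrAC mulfV // mul1r.
by rewrite /= exprS; field; rewrite u1' u1''.
Qed.

Lemma taylor_coefs_herglotz_kernel w : cabs w <= 1 ->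
  taylor_coefs (fun z => (1 + w * z) / (1 - w * z))
               (fun j => herglotz_coef j * w ^+ j).
Proof.
move=> hw z hz; set u := w * z.
have hu : cabs u < 1.
  by rewrite cabsM (le_lt_trans _ hz) // ler_piMl ?cabs_ge0.
have u1 : u != 1 by apply: contraTneq hu => ->; rewrite cabs1 ltxx.
have psumE N :
    psum (fun j => herglotz_coef j * w ^+ j) z N = psum herglotz_coef u N.
  by apply: eq_bigr => j _; rewrite exprMn mulrA.
clearbody u; rewrite -(cvg_shiftS _ (nbhs (0 : R))).
have -> : (fun N => cabs (psum (fun j => herglotz_coef j * w ^+ j) z N.+1
                           - (1 + u) / (1 - u)))
          = (fun N => 2 / cabs (1 - u) * cabs u ^+ N.+1).
  apply/funext => N; rewrite psumE psum_herglotz_coef //.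
  by rewrite mulNr cabsN !cabsM cabsV cabsX cabs_nat mulrAC.
rewrite -(mulr0 (2 / cabs (1 - u))); apply: cvgMl_tmp.
rewrite (cvg_shiftS (fun N => cabs u ^+ N)); apply: cvg_expr.
by rewrite ger0_norm ?cabs_ge0.
Qed.

Lemma taylor_coefs_sum (I : Type) (r : seq I) (a : I -> R[i])
    (F : I -> R[i] -> R[i]) (c : I -> nat -> R[i]) :
  (forall i, taylor_coefs (F i) (c i)) ->
  taylor_coefs (fun z => \sum_(i <- r) a i * F i z)
               (fun j => \sum_(i <- r) a i * c i j).
Proof.
move=> hF z hz.
pose err i N := cabs (psum (c i) z N - F i z).
pose h N := \sum_(i <- r) cabs (a i) * err i N.
apply: (squeeze_cvgr (f := cst 0) (h := h)); last 2 first.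
- exact: cvg_cst.
- have hlim i : cabs (a i) * err i N @[N --> \oo] --> (0 : R).
    by rewrite -(mulr0 (cabs (a i))); apply: cvgMl_tmp; exact: hF.
  have := @cvg_big _ _ +%R 0 xpredT add_continuous _ \oo r _ _ eventually_filter
    (fun i _ => hlim i).
  by rewrite big1.
apply: nearW => N; rewrite cabs_ge0 /=.
have -> : psum (fun j => \sum_(i <- r) a i * c i j) z N
            - \sum_(i <- r) a i * F i z
          = \sum_(i <- r) a i * (psum (c i) z N - F i z).
  rewrite /psum; under eq_bigr do rewrite mulr_suml.
  rewrite exchange_big /= -sumrB; apply: eq_bigr => i _.
  rewrite mulrBr mulr_sumr; congr (_ - _).
  by apply: eq_bigr => j _; rewrite mulrA.
apply: le_trans (cabs_sum _ _ _) _.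
by apply: ler_sum => i _; rewrite cabsM.
Qed.

Lemma taylor_coefs_herglotz_sum m (a phi : 'I_m -> R) :
  taylor_coefs (herglotz_sum a phi)
    (fun j => \sum_(k < m) (a k)%:C * (herglotz_coef j * expi (phi k) ^+ j)).
Proof.
apply: taylor_coefs_sum => k; apply: taylor_coefs_herglotz_kernel.
by rewrite cabs_expi.
Qed.

Lemma Hpoly_psum n (cf : nat -> R[i]) z :
  Hpoly n cf z = psum (fun j => herglotz_coef j * cf (n - j)%N) z n.+1.
Proof.
rewrite /psum big_ord_recl /Hpoly big_add1 big_mkord /= subn0 mul1r expr0 mulr1.
by congr (_ + _); apply: eq_bigr => j _; rewrite /= mulrAC.
Qed.

End HerglotzKernel.

Section BoundaryValues.
Variable R : realType.

Lemma Re_psum_ge0_closed_disk (c : nat -> R[i]) K (w : R[i]) : cabs w <= 1 ->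
  (forall z, cabs z < 1 -> 0 < complex.Re (psum c z K)) ->
  0 <= complex.Re (psum c w K).
Proof.
move=> hw hpos.
pose p : {poly R} := \poly_(j < K) complex.Re (c j * w ^+ j).
have pE r : p.[r] = complex.Re (psum c (r%:C * w) K).
  rewrite horner_poly /psum Re_sum; apply: eq_bigr => j _.
  by rewrite exprMn -rmorphXn mulrCA ReMl mulrC.
rewrite -[w]mul1r -(rmorph1 (real_complex R)) -pE.
apply: (cvgr_to_ge (F := (1 : R)^'-) (f := horner p)).
  exact/cvg_at_left_filter/continuous_horner.
near=> r; rewrite pE ltW // hpos // cabsM cabsR.
apply: (@le_lt_trans _ _ `|r|); first by rewrite ler_piMr.
rewrite gtr0_norm; near: r; [exact: nbhs_left_lt | ].
by apply: nbhs_left_gt.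
Unshelve. all: by end_near.
Qed.

End BoundaryValues.

Theorem theorem3 (R : realType) (n m : nat) (alpha beta phi : 'I_m -> R)
  (cf cg : nat -> R[i]) :
  (m <= n)%N ->
  (forall k, 0 < alpha k) ->
  (forall k, 0 < beta k) ->
  (forall k, 0 <= phi k /\ phi k < 2 * pi) ->
  (forall k l : 'I_m, (k < l)%N -> phi k < phi l) ->
  taylor_coefs (fun z => expC (- herglotz_sum alpha phi z)) cf ->
  taylor_coefs (herglotz_sum beta phi) cg ->
  (forall z : R[i], cabs z < 1 -> 0 < complex.Re (Hpoly n cf z)) ->
  (complex.Re (\sum_(j < n.+1) cf (n - j)%N * cg j) = 0 <->
   forall k : 'I_m, complex.Re (Hpoly n cf (expi (phi k))) = 0).
Proof.
move=> _ _ beta_gt0 _ _ _ g_coefs H_pos.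
have cgE := taylor_coefs_unique g_coefs (taylor_coefs_herglotz_sum beta phi).
have -> : \sum_(j < n.+1) cf (n - j)%N * cg j =
    \sum_(k < m) (beta k)%:C * Hpoly n cf (expi (phi k)).
  under eq_bigr do rewrite cgE mulr_sumr.
  rewrite exchange_big /=; apply: eq_bigr => k _.
  by rewrite Hpoly_psum /psum mulr_sumr; apply: eq_bigr => j _; ring.
have ReH_ge0 k : 0 <= complex.Re (Hpoly n cf (expi (phi k))).
  rewrite Hpoly_psum; apply: Re_psum_ge0_closed_disk.
    by rewrite cabs_expi.
  by move=> z /H_pos; rewrite Hpoly_psum.
have terms_ge0 k : true -> 0 <= beta k * complex.Re (Hpoly n cf (expi (phi k))).
  by move=> _; exact: mulr_ge0 (ltW (beta_gt0 k)) (ReH_ge0 k).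
rewrite Re_sum; under eq_bigr do rewrite ReMl.
split=> [/(psumr_eq0P terms_ge0) terms0 k | ReH0].
  by have /eqP := terms0 k isT; rewrite mulf_eq0 gt_eqF //= => /eqP.
by rewrite big1 // => k _; rewrite ReH0 mulr0.
Qed.
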